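(* Let $A\to B$ be a map of $\mathbb{Z}$-graded unital rings, where $A$ is concentrated in grade $0$. Suppose $A\to B$ is separable, i.e. the multiplication map $\mu:B\otimes_A B^{op}\to B$, viewed as a map of $B$-bimodules, admits a $B$-bimodule section $\sigma:B\to B\otimes_A B^{op}$. Suppose moreover that $B$ has no zero divisors in the subring $B_0$ (no nonzero element of $B_0$ is a zero divisor in $B$). Then $B$ is concentrated in grade $0$.
   Context: Rings are unital and ring maps unital; gradings are $\mathbb{Z}$-gradings, $B_n$ denotes the degree-$n$ part of $B$. *)

From HB Require Import structures.
From mathcomp Require Import all_boot all_order all_algebra.
Set Implicit Arguments. Unset Strict Implicit. Unset Printing Implicit Defensive.
Import Order.TTheory GRing.Theory Num.Theory.
Local Open Scope ring_scope.

Definition is_Zgrading (R : pzRingType) (G : int -> R -> Prop) : Prop :=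
  [/\ (forall n, G n 0 /\ forall x y, G n x -> G n y -> G n (x - y)),
      G 0 1,
      (forall m n x y, G m x -> G n y -> G (m + n) (x * y)),
      (forall b, exists (s : seq int) (x : int -> R),
          (forall n, G n (x n)) /\ b = \sum_(n <- s) x n) &
      (forall (s : seq int) (x : int -> R), uniq s ->
          (forall n, G n (x n)) -> \sum_(n <- s) x n = 0 ->
          forall n, n \in s -> x n = 0)].

Definition concentrated0 (R : pzRingType) (G : int -> R -> Prop) : Prop :=
  forall n x, n != 0 -> G n x -> x = 0.

(* The tensor product B (x)_A B (B a right A-module and a left A-module via
   f : A -> B) presented as formal finite sums  sum_i x_i (x) y_i  (lists of
   pairs, concatenation = addition) modulo the congruence generated by
   biadditivity and A-balancedness. *)
Inductive tens_rel (A B : pzRingType) (f : A -> B) :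
    seq (B * B) -> seq (B * B) -> Prop :=
| tr_refl s : tens_rel f s s
| tr_sym s t : tens_rel f s t -> tens_rel f t s
| tr_trans s t u : tens_rel f s t -> tens_rel f t u -> tens_rel f s u
| tr_cat s1 s2 t1 t2 : tens_rel f s1 t1 -> tens_rel f s2 t2 ->
    tens_rel f (s1 ++ s2) (t1 ++ t2)
| tr_perm s t : perm_eq s t -> tens_rel f s t
| tr_addl x x' y : tens_rel f [:: (x + x', y)] [:: (x, y); (x', y)]
| tr_addr x y y' : tens_rel f [:: (x, y + y')] [:: (x, y); (x, y')]
| tr_zero y : tens_rel f [:: (0, y)] [::]
| tr_bal x a y : tens_rel f [:: (x * f a, y)] [:: (x, f a * y)].

Definition tens_act (B : pzRingType) (b c : B) (s : seq (B * B)) :=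
  map (fun p => (b * p.1, p.2 * c)) s.

Definition tens_mu (B : pzRingType) (s : seq (B * B)) : B :=
  \sum_(p <- s) p.1 * p.2.

(* f : A -> B is separable: mu admits a B-bimodule section sigma
   (given by representatives; all identities hold in the quotient). *)
Definition separable (A B : pzRingType) (f : A -> B) : Prop :=
  exists sigma : B -> seq (B * B),
    [/\ (forall x y, tens_rel f (sigma (x + y)) (sigma x ++ sigma y)),
        (forall b c x, tens_rel f (sigma (b * x * c)) (tens_act b c (sigma x))) &
        (forall x, tens_mu (sigma x) = x)].

From HB Require Import structures.
From mathcomp Require Import all_boot all_order all_algebra.
From Stdlib Require Import ClassicalEpsilon.
Import GRing.Theory.
Local Open Scope ring_scope.

Set Implicit Arguments. Unset Strict Implicit. Unset Printing Implicit Defensive.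

(* Write the separability idempotent as e = sigma 1 = sum_i x_i (x) y_i.
   Since A sits in degree 0, the diagonal components
   c_p = sum_i (x_i)_p (y_i)_(-p) are well defined on B (x)_A B; they lie in
   B_0, only finitely many are nonzero, and they sum to the degree-0 part of
   mu(e) = 1.  For b homogeneous of degree d, the identity b e = e b gives
   b c_p = c_(p+d) b.  If d <> 0, some nonzero c_p has c_(p+d) = 0 (the
   support is finite), so b c_p = 0 and b = 0, as c_p is no zero divisor. *)

Lemma big_uniq_support (I : eqType) (V : nmodType) (s t : seq I) (h : I -> V) :
  uniq s -> uniq t -> {subset s <= t} -> (forall k, k \notin s -> h k = 0) ->
  \sum_(k <- t) h k = \sum_(k <- s) h k.
Proof.
move=> us ut st hs.
rewrite (bigID (mem s)) /= [X in _ + X]big1 ?addr0 => [|k /hs //].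
rewrite -big_filter; apply/perm_big/uniq_perm => [||k]; rewrite ?filter_uniq //.
by rewrite mem_filter; case: (boolP (k \in s)) => // /st.
Qed.

Lemma progression_exit (P : pred int) (S : seq int) p0 d :
  {subset P <= S} -> d != 0 -> P p0 -> exists2 p, P p & ~~ P (p + d).
Proof.
move=> PS d0 Pp0.
have [/hasP[p _ /andP[Pp nPpd]]|/hasPn noexit] :=
  boolP (has (fun p => P p && ~~ P (p + d)) S); first by exists p.
have step p : P p -> P (p + d).
  by move=> Pp; have := noexit p (PS p Pp); rewrite Pp negbK.
have Pn n : P (p0 + n%:Z * d).
  elim: n => [|n IH]; first by rewrite mul0r addr0.
  by rewrite intS mulrDl mul1r [d + _]addrC addrA step.
suff: ((size S).+1 <= size S)%N by rewrite ltnn.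
rewrite -[X in (X <= _)%N](size_iota 0) -(size_map (fun n : nat => p0 + n%:Z * d)).
apply: uniq_leq_size => [|_ /mapP[n _ ->]]; last exact/PS/Pn.
by rewrite map_inj_uniq ?iota_uniq // => m n /addrI /(mulIf d0) [].
Qed.

Section HomogeneousComponents.

Variables (B : pzRingType) (G : int -> B -> Prop).
Hypothesis gradedB : is_Zgrading G.

Lemma grading0 n : G n 0.
Proof. by case: gradedB => sub _ _ _ _; case: (sub n). Qed.

Lemma gradingB n x y : G n x -> G n y -> G n (x - y).
Proof. by case: gradedB => sub _ _ _ _; case: (sub n) => _; apply. Qed.

Lemma gradingD n x y : G n x -> G n y -> G n (x + y).
Proof.
move=> Gx Gy; rewrite -[y]opprK -[- y]sub0r.
by apply: gradingB => //; apply: gradingB => //; apply: grading0.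
Qed.

Lemma grading_sum n (I : Type) (r : seq I) (F : I -> B) :
  (forall i, G n (F i)) -> G n (\sum_(i <- r) F i).
Proof.
move=> GF; elim: r => [|i r IH]; first by rewrite big_nil; apply: grading0.
by rewrite big_cons; apply: gradingD.
Qed.

Lemma gradingM m n x y : G m x -> G n y -> G (m + n) (x * y).
Proof. by case: gradedB => _ _ mul _ _; apply: mul. Qed.

Definition homog_decomp (x : B) (s : seq int) (h : int -> B) :=
  [/\ uniq s, forall k, G k (h k), forall k, k \notin s -> h k = 0 &
      x = \sum_(k <- s) h k].

Lemma homog_decomp_unique x s h s' h' :
  homog_decomp x s h -> homog_decomp x s' h' -> h =1 h'.
Proof.
move=> [us Gh hs ->] [us' Gh' hs' x_eq] k.
have [_ _ _ _ direct] := gradedB.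
set t := undup (s ++ s'); have ut : uniq t := undup_uniq _.
have st : {subset s <= t} by move=> j; rewrite mem_undup mem_cat => ->.
have s't : {subset s' <= t} by move=> j; rewrite mem_undup mem_cat => ->; rewrite orbT.
case: (boolP (k \in t)) => [kt|]; last first.
  by rewrite mem_undup mem_cat negb_or => /andP[ks ks']; rewrite hs // hs'.
apply/eqP; rewrite -subr_eq0; apply/eqP.
apply: (direct t (fun k => h k - h' k)) => // [j|]; first exact: gradingB.
rewrite sumrB (big_uniq_support us ut st hs) (big_uniq_support us' ut s't hs').
by rewrite x_eq subrr.
Qed.

Lemma homog_decompD x s h y s' h' :
  homog_decomp x s h -> homog_decomp y s' h' ->
  homog_decomp (x + y) (undup (s ++ s')) (fun k => h k + h' k).
Proof.
move=> [us Gh hs ->] [us' Gh' hs' ->].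
have ut := undup_uniq (s ++ s').
have st : {subset s <= undup (s ++ s')}.
  by move=> j; rewrite mem_undup mem_cat => ->.
have s't : {subset s' <= undup (s ++ s')}.
  by move=> j; rewrite mem_undup mem_cat => ->; rewrite orbT.
split=> // [k|k|]; first exact: gradingD.
  by rewrite mem_undup mem_cat negb_or => /andP[ks ks']; rewrite hs // hs' // addr0.
by rewrite big_split /= (big_uniq_support us ut st hs) (big_uniq_support us' ut s't hs').
Qed.

Lemma homog_decomp_homog m z :
  G m z -> homog_decomp z [:: m] (fun k => if k == m then z else 0).
Proof.
move=> Gz; split=> // [k|k|]; last by rewrite big_seq1 eqxx.
  by case: eqP => [->|_] //; apply: grading0.
by rewrite inE => /negbTE ->.
Qed.

Lemma homog_decomp_exists x : exists s h, homog_decomp x s h.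
Proof.
have [_ _ _ decomp _] := gradedB; have [r [y [Gy ->]]] := decomp x.
elim: r => [|n r [s [h IH]]].
  by exists [::], (fun=> 0); split; rewrite ?big_nil // => k; apply: grading0.
by rewrite big_cons; do 2!eexists; apply: homog_decompD IH; apply: homog_decomp_homog.
Qed.

(* The degree-[n] component of [x]; the choice is immaterial by uniqueness of
   homogeneous decompositions. *)
Definition hcomp (n : int) (x : B) : B :=
  epsilon (inhabits 0) (fun y => exists s h, homog_decomp x s h /\ y = h n).

Lemma hcomp_decomp x s h n : homog_decomp x s h -> hcomp n x = h n.
Proof.
move=> dec_x; rewrite /hcomp.
have [|s' [h' [dec_x' ->]]] :=
  epsilon_spec (inhabits 0) (fun y => exists s h, homog_decomp x s h /\ y = h n).
  by exists (h n), s, h.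
by rewrite (homog_decomp_unique dec_x dec_x').
Qed.

Lemma hcomp_decomp_exists x : exists s, homog_decomp x s (hcomp^~ x).
Proof.
have [s [h dec_x]] := homog_decomp_exists x.
have hcompE k : hcomp k x = h k := hcomp_decomp k dec_x.
exists s; case: dec_x => us Gh hs x_eq; split=> //.
- by move=> k; rewrite hcompE.
- by move=> k ks; rewrite hcompE hs.
- by rewrite {1}x_eq; apply: eq_bigr => k _; rewrite hcompE.
Qed.

Lemma hcomp_homog n x : G n (hcomp n x).
Proof. by have [s [_ Gh _ _]] := hcomp_decomp_exists x. Qed.

Lemma hcomp_homog_eq m k z : G m z -> hcomp k z = if k == m then z else 0.
Proof. by move=> Gz; rewrite (hcomp_decomp k (homog_decomp_homog Gz)). Qed.

Lemma hcomp0 n : hcomp n 0 = 0.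
Proof. by rewrite (hcomp_homog_eq n (grading0 0)); case: ifP. Qed.

Lemma hcompD n x y : hcomp n (x + y) = hcomp n x + hcomp n y.
Proof.
have [s dec_x] := hcomp_decomp_exists x; have [s' dec_y] := hcomp_decomp_exists y.
exact: hcomp_decomp (homog_decompD dec_x dec_y).
Qed.

Lemma hcomp_sum n (I : Type) (r : seq I) (F : I -> B) :
  hcomp n (\sum_(i <- r) F i) = \sum_(i <- r) hcomp n (F i).
Proof.
elim: r => [|i r IH]; first by rewrite !big_nil hcomp0.
by rewrite !big_cons hcompD IH.
Qed.

Lemma hcompMl m n x y : G m x -> hcomp (m + n) (x * y) = x * hcomp n y.
Proof.
move=> Gx; have [s [us Gy ys y_eq]] := hcomp_decomp_exists y.
suff dec_xy : homog_decomp (x * y) [seq m + k | k <- s] (fun j => x * hcomp (j - m) y).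
  by rewrite (hcomp_decomp _ dec_xy) [m + n]addrC addrK.
split.
- by rewrite map_inj_uniq // => ? ? /addrI.
- by move=> j; rewrite -{1}[j](subrKC m); apply: gradingM.
- move=> j; apply: contraNeq => xyj; apply/mapP; exists (j - m); last by rewrite subrKC.
  by apply: contraR xyj => /ys ->; rewrite mulr0.
- by rewrite big_map {1}y_eq mulr_sumr; apply: eq_bigr => k _; rewrite [m + k]addrC addrK.
Qed.

Lemma hcompMr m n x y : G m y -> hcomp (n + m) (x * y) = hcomp n x * y.
Proof.
move=> Gy; have [s [us Gx xs x_eq]] := hcomp_decomp_exists x.
suff dec_xy : homog_decomp (x * y) [seq k + m | k <- s] (fun j => hcomp (j - m) x * y).
  by rewrite (hcomp_decomp _ dec_xy) addrK.
split.
- by rewrite map_inj_uniq // => ? ? /addIr.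
- by move=> j; rewrite -{1}[j](subrK m); apply: gradingM.
- move=> j; apply: contraNeq => xyj; apply/mapP; exists (j - m); last by rewrite subrK.
  by apply: contraR xyj => /xs ->; rewrite mul0r.
- by rewrite big_map {1}x_eq mulr_suml; apply: eq_bigr => k _; rewrite addrK.
Qed.

Lemma hcomp_support_sum x t :
  uniq t -> (forall k, k \notin t -> hcomp k x = 0) -> x = \sum_(k <- t) hcomp k x.
Proof.
move=> ut xt; have [s [us _ xs x_eq]] := hcomp_decomp_exists x.
have uu := undup_uniq (s ++ t).
have su : {subset s <= undup (s ++ t)} by move=> j; rewrite mem_undup mem_cat => ->.
have tu : {subset t <= undup (s ++ t)}.
  by move=> j; rewrite mem_undup mem_cat => ->; rewrite orbT.
by rewrite -(big_uniq_support ut uu tu xt) (big_uniq_support us uu su xs).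
Qed.

Lemma hcomp0M x y t : uniq t -> (forall k, k \notin t -> hcomp k x = 0) ->
  hcomp 0 (x * y) = \sum_(k <- t) hcomp k x * hcomp (- k) y.
Proof.
move=> ut xt; rewrite {1}(hcomp_support_sum ut xt) mulr_suml hcomp_sum.
by apply: eq_bigr => k _; rewrite -(hcompMl _ _ (hcomp_homog k x)) subrr.
Qed.

End HomogeneousComponents.

Lemma rmorph_grade0 (A B : pzRingType) (GA : int -> A -> Prop)
    (GB : int -> B -> Prop) (f : {rmorphism A -> B}) :
  is_Zgrading GA -> is_Zgrading GB -> concentrated0 GA ->
  (forall n a, GA n a -> GB n (f a)) -> forall a, GB 0 (f a).
Proof.
move=> gradedA gradedB concA f_homog a.
have [_ _ _ decomp _] := gradedA; have [s [x [Gx ->]]] := decomp a.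
rewrite rmorph_sum; apply: grading_sum => // n.
have [->|n0] := eqVneq n 0; first exact: f_homog.
by rewrite (concA n (x n) n0 (Gx n)) rmorph0; apply: grading0.
Qed.

Section TensorComponents.

Variables (A B : pzRingType) (G : int -> B -> Prop) (f : A -> B).
Hypotheses (gradedB : is_Zgrading G) (f_grade0 : forall a, G 0 (f a)).

Definition tens_bicomp (p q : int) (l : seq (B * B)) : B :=
  \sum_(xy <- l) hcomp G p xy.1 * hcomp G q xy.2.

Lemma tens_bicomp_rel p q l1 l2 :
  tens_rel f l1 l2 -> tens_bicomp p q l1 = tens_bicomp p q l2.
Proof.
rewrite /tens_bicomp; elim=> {l1 l2} //.
- by move=> s t u _ -> _ ->.
- by move=> s1 s2 t1 t2 _ e1 _ e2; rewrite !big_cat e1 e2.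
- by move=> s t; apply: perm_big.
- by move=> x x' y; rewrite !big_cons !big_nil /= (hcompD gradedB) mulrDl !addr0.
- by move=> x y y'; rewrite !big_cons !big_nil /= (hcompD gradedB) mulrDr !addr0.
- by move=> y; rewrite !big_cons !big_nil /= (hcomp0 gradedB) mul0r !addr0.
move=> x a y; rewrite !big_cons !big_nil /= !addr0.
have := hcompMr gradedB p x (f_grade0 a); have := hcompMl gradedB q y (f_grade0 a).
by rewrite addr0 add0r => -> ->; rewrite mulrA.
Qed.

Lemma tens_bicomp_actl b d p q l :
  G d b -> tens_bicomp (p + d) q (tens_act b 1 l) = b * tens_bicomp p q l.
Proof.
move=> Gb; rewrite /tens_bicomp /tens_act big_map mulr_sumr.
by apply: eq_bigr => xy _ /=; rewrite mulr1 addrC (hcompMl gradedB _ _ Gb) mulrA.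
Qed.

Lemma tens_bicomp_actr b d p q l :
  G d b -> tens_bicomp p (q + d) (tens_act 1 b l) = tens_bicomp p q l * b.
Proof.
move=> Gb; rewrite /tens_bicomp /tens_act big_map mulr_suml.
by apply: eq_bigr => xy _ /=; rewrite mul1r (hcompMr gradedB _ _ Gb) mulrA.
Qed.

Lemma tens_bicomp_diag_grade0 p l : G 0 (tens_bicomp p (- p) l).
Proof.
apply: grading_sum => // xy; rewrite -(subrr p).
exact: gradingM (hcomp_homog _ _ _) (hcomp_homog _ _ _).
Qed.

Lemma tens_bicomp_diag_comm b d p l : G d b ->
    tens_rel f (tens_act b 1 l) (tens_act 1 b l) ->
  b * tens_bicomp p (- p) l = tens_bicomp (p + d) (- (p + d)) l * b.
Proof.
move=> Gb bl_lb; rewrite -(tens_bicomp_actl _ _ _ Gb) (tens_bicomp_rel _ _ bl_lb).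
by rewrite -(tens_bicomp_actr _ _ _ Gb) opprD addrNK.
Qed.

Lemma tens_fst_support (l : seq (B * B)) : exists2 S, uniq S &
  forall k xy, k \notin S -> xy \in l -> hcomp G k xy.1 = 0.
Proof.
elim: l => [|xy l [S uS lS]]; first by exists [::].
have [s [us _ xs _]] := hcomp_decomp_exists gradedB xy.1.
exists (undup (s ++ S)) => [|k xy']; first exact: undup_uniq.
rewrite mem_undup mem_cat negb_or inE => /andP[ks kS] /orP[/eqP ->|]; first exact: xs.
exact: lS.
Qed.

Section Support.

Variables (S : seq int) (l : seq (B * B)).
Hypotheses (uS : uniq S)
  (lS : forall k (xy : B * B), k \notin S -> xy \in l -> hcomp G k xy.1 = 0).

Lemma tens_bicomp_out p q : p \notin S -> tens_bicomp p q l = 0.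
Proof.
by move=> pS; rewrite /tens_bicomp big1_seq // => xy /andP[_ /(lS pS) ->]; rewrite mul0r.
Qed.

Lemma sum_tens_bicomp_diag :
  \sum_(k <- S) tens_bicomp k (- k) l = hcomp G 0 (tens_mu l).
Proof.
rewrite /tens_bicomp /tens_mu exchange_big (hcomp_sum gradedB) /= big_seq [RHS]big_seq.
by apply: eq_bigr => xy xyl; rewrite (hcomp0M gradedB _ uS) // => k kS; apply: lS.
Qed.

End Support.

End TensorComponents.

Theorem theorem4p2 (A B : pzRingType) (GA : int -> A -> Prop)
    (GB : int -> B -> Prop) (f : {rmorphism A -> B}) :
  is_Zgrading GA -> is_Zgrading GB ->
  concentrated0 GA ->
  (forall n a, GA n a -> GB n (f a)) ->
  separable f ->
  (forall z, GB 0 z -> z != 0 ->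
     forall y, (z * y = 0 -> y = 0) /\ (y * z = 0 -> y = 0)) ->
  concentrated0 GB.
Proof.
move=> gradedA gradedB concA f_homog [sigma [_ sigma_bimod sigma_mu]] nzd d b d0 Gb.
have f0 := rmorph_grade0 gradedA gradedB concA f_homog.
have [one0|one_neq0] := eqVneq (1 : B) 0; first by rewrite -[b]mulr1 one0 mulr0.
pose c p := tens_bicomp GB p (- p) (sigma 1).
have c_comm p : b * c p = c (p + d) * b.
  apply: (tens_bicomp_diag_comm gradedB f0 p Gb).
  have := sigma_bimod b 1 1; have := sigma_bimod 1 b 1.
  rewrite !mulr1 !mul1r => e_right e_left; exact: tr_trans (tr_sym e_left) e_right.
have [S uS supp] := tens_fst_support gradedB (sigma 1).
have sum_c : \sum_(p <- S) c p = 1.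
  have [_ G01 _ _ _] := gradedB.
  by rewrite sum_tens_bicomp_diag // sigma_mu (hcomp_homog_eq gradedB 0 G01) eqxx.
have [p0 _ cp0] : exists2 p0, p0 \in S & c p0 != 0.
  apply/hasP; apply: contraNT one_neq0 => /hasPn c0.
  by rewrite -sum_c big1_seq // => p /andP[_ /c0]; rewrite negbK => /eqP.
have c_supp : {subset [pred p | c p != 0] <= S}.
  by move=> p; apply: contraR => pS; rewrite /c (tens_bicomp_out supp).
have [p cp /negPn/eqP cpd] := progression_exit c_supp d0 cp0.
apply: (proj2 (nzd _ (tens_bicomp_diag_grade0 gradedB _ _) cp b)).
by rewrite c_comm cpd mul0r.
Qed.
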